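(* Let $\Phi=\forall u_1\ldots\forall u_n\exists e_1(D_1)\ldots\exists e_m(D_m).\varphi$ be a DQBF, let $\tau$ be a (partial) assignment to a set $A$ of arbiter variables, and let $\rho\in[U]$. If $\varphi^\rho\wedge\tau^\rho$ is unsatisfiable, then some subclause of the clause $\neg\tau^\rho$ (the disjunction of the negations of the literals in $\tau^\rho$) is derivable from $\Phi$ in the $\forall$Exp+Res calculus.
   Context: For a set $V$ of variables, $[V]$ is the set of assignments $V\to\{\textsc{true},\textsc{false}\}$; assignments are identified with terms of the literals they make true, and $\sigma|_W$ denotes restriction. A DQBF is $\Phi=\forall u_1\ldots\forall u_n\exists e_1(D_1)\ldots\exists e_m(D_m).\varphi$ with pairwise distinct variables, $U=\{u_i\}$, $E=\{e_j\}$, dependency sets $D(e_j)=D_j\subseteq U$, and $\varphi$ a CNF over $U\cup E$. For $e\in E$ and $\sigma\in[D(e)]$, $e^\sigma$ denotes an annotated (arbiter) variable, different annotations giving different variables; for a literal $\ell$ on $e$, $\ell^\sigma$ is the literal on $e^\sigma$ of the same polarity. For a partial assignment $\tau$ to arbiter variables and $\rho\in[U]$, $\tau^\rho=\{\ell^\sigma\in\tau\mid\rho\models\sigma\}$. For $\rho\in[U]$, $\varphi^\rho=\{\{x^{\rho|_{D(\mathit{var}(x))}}\mid x\in C,\ \mathit{var}(x)\in E\}\mid C\in\varphi,\ \text{no universal literal of }C\text{ is satisfied by }\rho\}$. The $\forall$Exp+Res calculus for $\Phi$ has two rules: (axiom) for any clause $C\in\varphi$ and any $\sigma\in[U]$ falsifying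 every universal literal of $C$, derive $\{\ell^{\sigma|_{D(\mathit{var}(\ell))}}\mid\ell\in C,\ \mathit{var}(\ell)\in E\}$; (resolution) from $C_1\cup\{x^\tau\}$ and $C_2\cup\{\neg x^\tau\}$ derive $C_1\cup C_2$. A clause is derivable from $\Phi$ if it is the last clause of a finite sequence each of whose clauses is obtained by one of these rules from earlier clauses. *)

From mathcomp Require Import all_boot.
Set Implicit Arguments. Unset Strict Implicit. Unset Printing Implicit Defensive.

Section DQBF.
(* n universal variables u_0..u_{n-1}, m existential variables e_0..e_{m-1}. *)
Variables (n m : nat).

(* A variable of the matrix: inl i = u_i (universal), inr j = e_j (existential). *)
Definition var := ('I_n + 'I_m)%type.
(* A literal: (variable, polarity); polarity true = positive literal. *)
Definition lit := (var * bool)%type.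
Definition clause := {set lit}.

Definition uassign := 'I_n -> bool.

(* An annotation sigma in [D_j] is
   encoded by the subset s of D_j of universals that sigma sets to true;
   (j, s) is a genuine arbiter variable iff s \subset D_j. *)
Definition avar := ('I_m * {set 'I_n})%type.
Definition alit := (avar * bool)%type.
Definition aclause := {set alit}.

Definition neg_alit (l : alit) : alit := (l.1, ~~ l.2).

Variable D : 'I_m -> {set 'I_n}.

(* rho|_W, encoded as the subset of W set true by rho. *)
Definition restr (rho : uassign) (W : {set 'I_n}) : {set 'I_n} :=
  [set u in W | rho u].

Definition models_annot (rho : uassign) (v : avar) : bool :=
  restr rho (D v.1) == v.2.

Definition is_arbiter (v : avar) : bool := v.2 \subset D v.1.

Definition falsifies_univ (rho : uassign) (C : clause) : Prop :=
  forall (i : 'I_n) (b : bool), (inl i, b) \in C -> rho i != b.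

Definition expand (rho : uassign) (C : clause) : aclause :=
  [set l : alit | (l.1.2 == restr rho (D l.1.1)) && ((inr l.1.1, l.2) \in C)].

Variable phi : seq clause.

Definition phi_rho (rho : uassign) : seq aclause :=
  map (expand rho)
    (filter (fun C : clause => [forall i : 'I_n, forall b : bool,
                                 (((inl i, b) : lit) \in C) ==> (rho i != b)]) phi).

Definition tau_rho (tau : {set alit}) (rho : uassign) : {set alit} :=
  [set l in tau | models_annot rho l.1].

Definition sat_alit (alpha : avar -> bool) (l : alit) : bool := alpha l.1 == l.2.
Definition sat_aclause (alpha : avar -> bool) (C : aclause) : bool :=
  [exists l in C, sat_alit alpha l].

Definition satisfiable_phi_tau (rho : uassign) (tau : {set alit}) : Prop :=
  exists alpha : avar -> bool,
    (forall C, C \in phi_rho rho -> sat_aclause alpha C) /\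
    (forall l, l \in tau_rho tau rho -> sat_alit alpha l).

Definition axiom_clause (K : aclause) : Prop :=
  exists (C : clause) (sigma : uassign),
    C \in phi /\ falsifies_univ sigma C /\ K = expand sigma C.

Definition resolvent (K1 K2 K : aclause) : Prop :=
  exists (C1 C2 : aclause) (l : alit),
    K1 = C1 :|: [set l] /\ K2 = C2 :|: [set neg_alit l] /\ K = C1 :|: C2.

Definition is_derivation (s : seq aclause) : Prop :=
  forall i, i < size s ->
    axiom_clause (nth set0 s i) \/
    exists j k, j < i /\ k < i /\
      resolvent (nth set0 s j) (nth set0 s k) (nth set0 s i).

Definition derivable (K : aclause) : Prop :=
  exists s : seq aclause, is_derivation s /\ s != [::] /\ last set0 s = K.

End DQBF.

(* This is refutation completeness of resolution, since every clause of phi^rho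
   is an axiom instance (take sigma = rho).  Induct on the number of arbiter
   variables left unassigned by the consistent set T = tau^rho.  If T is total it
   induces an assignment that falsifies some clause of phi^rho, and every literal
   of that clause is the negation of one in T.  Otherwise pick an unassigned v:
   the clauses obtained for T + v and for T + ~v either already avoid the pivot
   or resolve on v to a subclause of ~T. *)
From mathcomp Require Import all_boot.
From mathcomp Require Import zify.
Set Implicit Arguments. Unset Strict Implicit. Unset Printing Implicit Defensive.

Section Derivations.

Variables (n m : nat) (D : 'I_m -> {set 'I_n}) (phi : seq (clause n m)).

Lemma is_derivation_cat (s1 s2 : seq (aclause n m)) :
  is_derivation D phi s1 -> is_derivation D phi s2 ->
  is_derivation D phi (s1 ++ s2).
Proof.
move=> der1 der2 i; rewrite size_cat => lt_i.
case: (ltnP i (size s1)) => [lt_i1|le_1i].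
  rewrite nth_cat lt_i1.
  case: (der1 i lt_i1) => [ax|[j [k [lt_ji [lt_ki res]]]]]; [by left|right].
  by exists j, k; rewrite !nth_cat (ltn_trans lt_ji lt_i1) (ltn_trans lt_ki lt_i1).
rewrite nth_cat ltnNge le_1i /=.
have lt_i2 : i - size s1 < size s2 by lia.
case: (der2 _ lt_i2) => [ax|[j [k [lt_j [lt_k res]]]]]; [by left|right].
exists (size s1 + j), (size s1 + k).
by rewrite !nth_cat !ltnNge !leq_addr /= !addKn; split; [lia|split; [lia|]].
Qed.

Lemma is_derivation_rcons (s : seq (aclause n m)) (K : aclause n m) j k :
  is_derivation D phi s -> j < size s -> k < size s ->
  resolvent (nth set0 s j) (nth set0 s k) K ->
  is_derivation D phi (rcons s K).
Proof.
move=> der lt_j lt_k res i; rewrite size_rcons ltnS leq_eqVlt.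
case/orP=> [/eqP ->|lt_i].
  by right; exists j, k; rewrite !nth_rcons lt_j lt_k ltnn eqxx.
rewrite nth_rcons lt_i.
case: (der i lt_i) => [ax|[j' [k' [lt_j' [lt_k' res']]]]]; [by left|right].
by exists j', k'; rewrite !nth_rcons (ltn_trans lt_j' lt_i) (ltn_trans lt_k' lt_i).
Qed.

Lemma derivable_axiom (K : aclause n m) :
  axiom_clause D phi K -> derivable D phi K.
Proof. by move=> ax; exists [:: K]; split=> // i; case: i => // _; left. Qed.

Lemma derivable_resolvent (K1 K2 K : aclause n m) :
  derivable D phi K1 -> derivable D phi K2 -> resolvent K1 K2 K ->
  derivable D phi K.
Proof.
move=> [s1 [der1 [ne1 last1]]] [s2 [der2 [ne2 last2]]] res.
have pos1 : 0 < size s1 by case: s1 ne1 {der1 last1}.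
have pos2 : 0 < size s2 by case: s2 ne2 {der2 last2}.
exists (rcons (s1 ++ s2) K); split; last by rewrite last_rcons; case: (s1 ++ s2).
apply: (@is_derivation_rcons _ _ (size s1).-1 (size s1 + size s2).-1).
- exact: is_derivation_cat.
- by rewrite size_cat; lia.
- by rewrite size_cat; lia.
have -> : (size s1 + size s2).-1 = size s1 + (size s2).-1 by lia.
by rewrite nth_cat prednK // leqnn nth_cat ltnNge leq_addr /= addKn !nth_last
  last1 last2.
Qed.

Lemma axiom_clause_phi_rho (rho : uassign n) (C : aclause n m) :
  C \in phi_rho D phi rho -> axiom_clause D phi C.
Proof.
case/mapP=> C0; rewrite mem_filter => /andP [/forallP falsC0 inC0] ->.
exists C0, rho; split=> //; split=> // i b.
by move: (falsC0 i) => /forallP /(_ b) /implyP.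
Qed.

End Derivations.

Section Completeness.

Variables (n m : nat).
Implicit Types (T : {set alit n m}) (l : alit n m) (alpha : avar n m -> bool).

Definition consistent T : Prop := forall l, l \in T -> neg_alit l \notin T.

Definition unassigned T : {set avar n m} :=
  [set v | ((v, true) \notin T) && ((v, false) \notin T)].

Lemma neg_alitK : involutive (@neg_alit n m).
Proof. by case=> v b; rewrite /neg_alit negbK. Qed.

Lemma sat_neg_alit alpha l : sat_alit alpha (neg_alit l) = ~~ sat_alit alpha l.
Proof. by case: l => v [] /=; rewrite /sat_alit; case: (alpha v). Qed.

Lemma sat_total_assignment T l :
  unassigned T = set0 -> consistent T ->
  sat_alit (fun v => (v, true) \in T) l = (l \in T).
Proof.
move=> total cons; case: l => v [] /=; rewrite /sat_alit /= ?eqb_id //.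
have /negbT : v \in unassigned T = false by rewrite total inE.
rewrite inE negb_and !negbK eqbF_neg.
case: (boolP ((v, true) \in T)) => [vtT _|_ /= ->] //.
by apply/esym/negbTE; move: (cons _ vtT).
Qed.

Lemma consistent_setU1 T v b :
  consistent T -> v \in unassigned T -> consistent ((v, b) |: T).
Proof.
move=> cons; rewrite inE => /andP [vtT vfT] l; rewrite !in_setU1 negb_or.
case/orP=> [/eqP -> | lT].
  by rewrite /neg_alit /= xpair_eqE eqxx; case: b.
rewrite (cons _ lT) andbT; apply/eqP=> eq_neg.
move: lT; rewrite -[l]neg_alitK eq_neg /neg_alit {eq_neg}.
by case: b; rewrite ?(negbTE vtT) ?(negbTE vfT).
Qed.

Lemma unassigned_setU1 T v b :
  v \in unassigned T -> unassigned ((v, b) |: T) \proper unassigned T.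
Proof.
move=> vT; apply/properP; split.
  by apply/subsetP=> w; rewrite !inE !negb_or => /andP [/andP [_ ->] /andP [_ ->]].
by exists v; rewrite // !inE; case: b; rewrite eqxx ?andbF.
Qed.

Variables (P : aclause n m -> Prop) (S : seq (aclause n m)).
Hypothesis P_S : forall C, C \in S -> P C.
Hypothesis P_resolvent : forall K1 K2 K, P K1 -> P K2 -> resolvent K1 K2 K -> P K.

Lemma resolve_on_pivot (v : avar n m) (N K1 K2 : aclause n m) :
  P K1 -> P K2 -> K1 \subset (v, false) |: N -> K2 \subset (v, true) |: N ->
  exists2 K : aclause n m, K \subset N & P K.
Proof.
have drop_pivot (x : alit n m) (K : aclause n m) :
    K \subset x |: N -> x \notin K -> K \subset N.
  move=> /subsetP KxN xK; apply/subsetP=> y yK.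
  by case/setU1P: (KxN y yK) => [eq_yx|//]; rewrite -eq_yx yK in xK.
move=> PK1 PK2 K1N K2N.
have [vfK1|vfK1] := boolP ((v, false) \in K1); last first.
  by exists K1; first exact: drop_pivot vfK1.
have [vtK2|vtK2] := boolP ((v, true) \in K2); last first.
  by exists K2; first exact: drop_pivot vtK2.
exists ((K1 :\ (v, false)) :|: (K2 :\ (v, true))).
  rewrite subUset; apply/andP; split.
    apply: (drop_pivot (v, false)); last by rewrite setD11.
    exact: subset_trans (subD1set _ _) K1N.
  apply: (drop_pivot (v, true)); last by rewrite setD11.
  exact: subset_trans (subD1set _ _) K2N.
apply: P_resolvent PK1 PK2 _.
exists (K1 :\ (v, false)), (K2 :\ (v, true)), (v, false).
by rewrite /neg_alit /= !(setUC _ [set _]) !setD1K.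
Qed.

Lemma total_falsified_clause T :
  unassigned T = set0 -> consistent T ->
  ~ (exists alpha, (forall C, C \in S -> sat_aclause alpha C) /\
                   (forall l, l \in T -> sat_alit alpha l)) ->
  exists2 K : aclause n m, K \subset [set neg_alit l | l in T] & P K.
Proof.
move=> total cons unsat; pose alpha v := (v, true) \in T.
have satT l : sat_alit alpha l = (l \in T) by exact: sat_total_assignment.
have [satS|/allPn [C CS /negP falsC]] := boolP (all (sat_aclause alpha) S).
  by case: unsat; exists alpha; split=> [C /(allP satS)|l]; rewrite // satT.
exists C; last exact: P_S.
apply/subsetP=> l lC; apply/imsetP; exists (neg_alit l); last by rewrite neg_alitK.
rewrite -satT sat_neg_alit; apply/negP=> sat_l; apply: falsC.
by apply/exists_inP; exists l.
Qed.

Theorem resolution_complete T :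
  consistent T ->
  ~ (exists alpha, (forall C, C \in S -> sat_aclause alpha C) /\
                   (forall l, l \in T -> sat_alit alpha l)) ->
  exists2 K : aclause n m, K \subset [set neg_alit l | l in T] & P K.
Proof.
have [k] := ubnP #|unassigned T|; elim: k T => // k IHk T lt_k cons unsat.
have [total|[v vT]] := set_0Vmem (unassigned T).
  exact: total_falsified_clause.
have below b : exists2 K : aclause n m,
    K \subset neg_alit (v, b) |: [set neg_alit l | l in T] & P K.
  rewrite -imsetU1; apply: IHk.
  - exact: leq_trans (proper_card (unassigned_setU1 _ vT)) _.
  - exact: consistent_setU1.
  case=> alpha [satS satT]; apply: unsat; exists alpha; split=> // l lT.
  by apply: satT; rewrite in_setU1 lT orbT.
have [K1 K1N PK1] := below true; have [K2 K2N PK2] := below false.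
exact: resolve_on_pivot PK1 PK2 K1N K2N.
Qed.

End Completeness.

Theorem lemma6 (n m : nat) (D : 'I_m -> {set 'I_n}) (phi : seq (clause n m))
    (tau : {set alit n m}) (rho : uassign n)
    (tau_arb : forall l, l \in tau -> is_arbiter D l.1)
    (tau_cons : forall l, l \in tau -> neg_alit l \notin tau) :
  ~ satisfiable_phi_tau D phi rho tau ->
  exists K : aclause n m,
    K \subset [set neg_alit l | l in tau_rho D tau rho] /\ derivable D phi K.
Proof.
move=> unsat.
have cons : consistent (tau_rho D tau rho).
  move=> l; rewrite !inE => /andP [l_tau _].
  by apply/negP=> /andP [neg_tau _]; move: (tau_cons _ l_tau); rewrite neg_tau.
have [K KN derK] := resolution_complete
  (fun C CS => derivable_axiom (axiom_clause_phi_rho CS))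
  (@derivable_resolvent _ _ D phi) cons unsat.
by exists K.
Qed.
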